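(* Let $\mathcal F$ be a Banach function space compactly embedded in $C(\mathbf X)$ and let $L\ge1$, $\gamma>0$ satisfy $\mathcal H_\epsilon(U_{\mathcal F})\le L(1/\epsilon)^\gamma$ for all $\epsilon\in(0,1/2]$. There exists a strategy for Predictor that guarantees, for all $N=1,2,\dots$, all $F\in\mathcal F$ and all moves of Reality, $$\sum_{n=1}^N(y_n-\mu_n)^2\le\sum_{n=1}^N(y_n-F(x_n))^2+C\left(L^{\frac1{\gamma+1}}\phi^{\frac\gamma{\gamma+1}}N^{\frac\gamma{\gamma+1}}+\log^+\log\frac N\gamma+\log\log\phi\right),$$ where $C$ is a universal constant and $\phi:=2\max(1,\|F\|_{\mathcal F})$.
   Context: Protocol: $\mathbf X$ a nonempty topological space; at each round $n$ Reality announces $x_n\in\mathbf X$, Predictor announces $\mu_n\in\mathbb R$, Reality announces $y_n\in[-1,1]$; a strategy for Predictor maps each history to $\mu_n$. $C(\mathbf X)$: bounded continuous real functions with supremum norm. A Banach function space compactly embedded in $C(\mathbf X)$: a linear subspace $\mathcal F\subseteq C(\mathbf X)$ with a norm making it a Banach space whose unit ball $U_{\mathcal F}$ is compact in $C(\mathbf X)$. $\mathcal H_\epsilon(A)$: $\log_2$ of the minimal number of points of $A$ forming an $\epsilon$-net for $A$ in the supremum metric. $\log=\log_2$; $\log^+t=\log t$ if $t\ge1$ and $0$ otherwise. *)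

From HB Require Import structures.
From mathcomp Require Import all_boot all_order all_algebra.
From mathcomp Require Import all_classical all_reals all_analysis.
Set Implicit Arguments. Unset Strict Implicit. Unset Printing Implicit Defensive.
Import Order.TTheory GRing.Theory Num.Theory numFieldNormedType.Exports.
Local Open Scope classical_set_scope.
Local Open Scope ring_scope.

Section Defs.
Variables (R : realType) (X : topologicalType).

Definition supnorm (f : X -> R) : R := sup [set `|f x| | x in [set: X]].

Definition CX : set (X -> R) :=
  [set f | continuous f /\ exists M : R, forall x, `|f x| <= M].

(* F is a linear subspace of C(X), nF is a norm on F making it a Banach space,
   and the unit ball of F is compact in C(X) (supremum-norm topology,
   i.e. the topology of uniform convergence on X). *)
Definition banach_compactly_embedded (F : set (X -> R)) (nF : (X -> R) -> R) : Prop :=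
  F `<=` CX /\
      F (fun _ => 0) /\
      (forall f g, F f -> F g -> F (fun x => f x + g x)) /\
      (forall (a : R) f, F f -> F (fun x => a * f x)) /\
      (forall f g, F f -> F g -> nF (fun x => f x + g x) <= nF f + nF g) /\
      (forall (a : R) f, F f -> nF (fun x => a * f x) = `|a| * nF f) /\
      (forall f, F f -> nF f = 0 -> f = (fun _ => 0)) /\
      (forall u : nat -> X -> R, (forall n, F (u n)) ->
         (forall e : R, 0 < e -> exists M : nat, forall m n, (M <= m)%N -> (M <= n)%N ->
            nF (fun x => u m x - u n x) < e) ->
         exists f, F f /\ (fun n => nF (fun x => u n x - f x)) @ \oo --> (0 : R)) /\
      compact ([set f | F f /\ nF f <= 1] : set {uniform X -> R}).

Definition is_net_card (A : set (X -> R)) (eps : R) (n : nat) : Prop :=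
  exists s : seq (X -> R), size s = n /\ (forall g, g \in s -> A g) /\
    forall f, A f -> exists2 g, g \in s & supnorm (fun x => f x - g x) <= eps.

Definition log2 (t : R) : R := ln t / ln 2.

Definition metric_entropy (A : set (X -> R)) (eps : R) : R :=
  log2 (inf [set (n%:R : R) | n in is_net_card A eps]).

End Defs.

Definition log2p {R : realType} (t : R) : R := if 1 <= t then log2 t else 0.

(* Predictor's strategy: given the history ((x_1,y_1),...,(x_{n-1},y_{n-1})) and x_n,
   output mu_n. *)
Definition strategy (R : realType) (X : Type) := seq (X * R) -> X -> R.

Definition pred_mu (R : realType) (X : Type) (S : strategy R X)
  (x : nat -> X) (y : nat -> R) (n : nat) : R :=
  S [seq (x i, y i) | i <- iota 0 n] (x n).

From HB Require Import structures.
From mathcomp Require Import all_boot all_order all_algebra.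
From mathcomp Require Import all_classical all_reals all_analysis.
From mathcomp Require Import ring lra zify.
Import Order.TTheory GRing.Theory Num.Theory numFieldNormedType.Exports.
Local Open Scope classical_set_scope.
Local Open Scope ring_scope.
Set Implicit Arguments. Unset Strict Implicit. Unset Printing Implicit Defensive.

(* Predictor runs the Aggregating Algorithm with learning rate 1/16, for which the square
   loss on [-1, 1] is mixable, over countably many experts: expert m has prior weight
   1/((m+1)(m+2)) and sleeps during the rounds t with 2^t <= m, so its regret is O(ln m).
   The experts are the clipped points of 2^-(I+J)-nets of the unit ball of F dilated by
   2^J, indexed by a code of (I, J, k) of polynomial size.  Given F and N, choose
   2^J ~ phi and 2^I ~ N / M, where M = L^(1/(g+1)) (phi N)^(g/(g+1)): some expert is within
   2^-I of F, which costs 4 N 2^-I = O(M), while the entropy bound gives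
   ln k <= L 2^((I+J) g) = O(M), and ln I = O(M + log log (N/g)), ln J = O(log log phi). *)

Section Logarithms.
Variable R : realType.

Lemma ln2_le1 : ln (2 : R) <= 1.
Proof.
rewrite -[leRHS](@expRK R) ler_ln ?posrE ?expR_gt0 //.
by have := @expR_ge1Dx R 1; lra.
Qed.

Lemma ln2_ge_half : 2^-1 <= ln (2 : R).
Proof.
rewrite -[leLHS](@expRK R) ler_ln ?posrE ?expR_gt0 //.
have h1 := @expR_ge1Dx R (- 2^-1).
have h2 : expR (2^-1) * expR (- 2^-1) = 1 :> R by rewrite -expRD subrr expR0.
have := @expR_gt0 R (2^-1); nra.
Qed.

Lemma ln2_gt0 : 0 < ln (2 : R).
Proof. by have := ln2_ge_half; lra. Qed.

Lemma ln_le_ln (a b : R) : 0 < a -> a <= b -> ln a <= ln b.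
Proof. by move=> a_gt0 ab; rewrite ler_ln ?posrE // (lt_le_trans a_gt0). Qed.

Lemma ln_pow2 (k : nat) : ln ((2 ^ k)%:R : R) = k%:R * ln 2.
Proof. by rewrite natrX lnXn // mulr_natl. Qed.

Lemma ln_succ_le (k : nat) : (1 <= k)%N -> ln (k.+1%:R : R) <= ln 2 + ln k%:R.
Proof.
move=> k_ge1; have k_ge1' : (1 : R) <= k%:R by rewrite ler1n.
rewrite -lnM ?posrE ?ltr0n // ln_le_ln ?ltr0n // -natr1; lra.
Qed.

Lemma log2p_ge0 (t : R) : 0 <= log2p t.
Proof.
by rewrite /log2p; case: ifP => // t_ge1; rewrite /log2 divr_ge0 ?ln_ge0 ?ler1n.
Qed.

Lemma log2_log2_ge0 (t : R) : 2 <= t -> 0 <= log2 (log2 t).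
Proof.
move=> t_ge2; rewrite /log2 divr_ge0 ?ln_ge0 ?ler1n // ler_pdivlMr ?ln2_gt0 // mul1r.
by rewrite ln_le_ln.
Qed.

Lemma pow2_bracket (B : R) : 1 <= B -> exists k : nat, ((2 ^ k)%:R : R) <= B < (2 ^ k.+1)%:R.
Proof.
move=> B_ge1.
have : exists k, B < (2 ^ k)%:R.
  exists (Num.bound B); apply: lt_le_trans (archi_boundP _) _; first lra.
  by rewrite ler_nat ltnW // ltn_expl.
case/ex_minnP => -[|k] B_lt kmin; first by rewrite expn0 in B_lt; lra.
by exists k; rewrite B_lt andbT leNgt; apply/negP => /kmin; rewrite ltnn.
Qed.

End Logarithms.

Section SquareLossMixability.
Variable R : realType.

Lemma sqr_sub_le4 (a b : R) : -1 <= a <= 1 -> -1 <= b <= 1 -> (a - b) ^+ 2 <= 4.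
Proof. by move=> /andP[? ?] /andP[? ?]; rewrite expr2; nra. Qed.

Lemma sum_sqr_sub_le (a b : nat -> R) N :
  (forall n, -1 <= a n <= 1) -> (forall n, -1 <= b n <= 1) ->
  \sum_(n < N) (a n - b n) ^+ 2 <= 4 * N%:R.
Proof.
move=> a_itv b_itv; rewrite mulr_natr -[in _ *+ N](card_ord N) -sumr_const.
by apply: ler_sum => n _; exact: sqr_sub_le4.
Qed.

Lemma expR_le_1DxDsqr (a : R) : -(4^-1) <= a <= 4^-1 -> expR a <= 1 + a + a ^+ 2.
Proof.
(* [expR a = expR (- a / 2) ^- 2 <= (1 - a / 2) ^- 2 <= 1 + a + a ^+ 2] for [|a| <= 1/4]. *)
move=> /andP[ha1 ha2].
set E := expR (- (a / 2)).
have hE : 1 - a / 2 <= E by have := expR_ge1Dx (- (a / 2)); rewrite /E; lra.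
have hEa : expR a * E ^+ 2 = 1.
  by rewrite /E expr2 mulrA -!expRD (_ : a + _ + _ = 0) ?expR0 //; lra.
have hpoly : 1 <= (1 + a + a ^+ 2) * (1 - a / 2) ^+ 2.
  have : 0 <= a ^+ 2 / 4 * (1 - 3 * a + a ^+ 2) by apply: mulr_ge0; nra.
  nra.
have ha0 := expR_gt0 a.
have : expR a * (1 - a / 2) ^+ 2 <= expR a * E ^+ 2.
  by apply: ler_wpM2l; rewrite ?expR_ge0 // !expr2; apply: ler_pM; lra.
nra.
Qed.

(* The right-hand side is the tangent at [p] of the map [q |-> expR (- (y - q) ^+ 2 / 16)],
   which is concave on [[-1, 1]]. *)
Lemma expR_sqloss_tangent (y p q : R) :
  -1 <= y <= 1 -> -1 <= p <= 1 -> -1 <= q <= 1 ->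
  expR (- ((y - q) ^+ 2 / 16)) <= expR (- ((y - p) ^+ 2 / 16)) * (1 + (y - p) * (q - p) / 8).
Proof.
move=> /andP[y1 y2] /andP[p1 p2] /andP[q1 q2].
set a := ((y - p) ^+ 2 - (y - q) ^+ 2) / 16.
have -> : expR (- ((y - q) ^+ 2 / 16)) = expR (- ((y - p) ^+ 2 / 16)) * expR a.
  by rewrite -expRD; congr expR; rewrite /a; lra.
rewrite ler_wpM2l ?expR_ge0 //.
have ha : -(4^-1) <= a <= 4^-1.
  have : 0 <= (y - p) ^+ 2 <= 4 by rewrite sqr_ge0 /=; nra.
  have : 0 <= (y - q) ^+ 2 <= 4 by rewrite sqr_ge0 /=; nra.
  by move=> /andP[? ?] /andP[? ?]; apply/andP; split; rewrite /a; lra.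
have hs : ((y - p) + (y - q)) ^+ 2 <= 16 by nra.
have ha2 : a ^+ 2 <= (q - p) ^+ 2 / 16.
  have -> : a = (q - p) * ((y - p) + (y - q)) / 16 by rewrite /a; ring.
  have := sqr_ge0 (q - p); rewrite !expr2; nra.
have -> : 1 + (y - p) * (q - p) / 8 = 1 + a + (q - p) ^+ 2 / 16 by rewrite /a; field.
by apply: le_trans (expR_le_1DxDsqr ha) _; lra.
Qed.

Section WeightedMean.
Variables (n : nat) (w q : nat -> R).
Hypotheses (w_ge0 : forall m, 0 <= w m) (sumw_gt0 : 0 < \sum_(m < n) w m)
  (q_itv : forall m, -1 <= q m <= 1).

Let p := (\sum_(m < n) w m * q m) / \sum_(m < n) w m.

Lemma wmean_itv : -1 <= p <= 1.
Proof.
have hpS : p * \sum_(m < n) w m = \sum_(m < n) w m * q m by rewrite /p divfK ?gt_eqF.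
apply/andP; split; rewrite -(ler_pM2r sumw_gt0) hpS ?mulN1r ?mul1r -?sumrN;
  apply: ler_sum => i _; have := w_ge0 i; have := q_itv i; move=> /andP[] *; nra.
Qed.

Lemma sqloss_mixable (y : R) : -1 <= y <= 1 ->
  \sum_(m < n) w m * expR (- ((y - q m) ^+ 2 / 16))
    <= (\sum_(m < n) w m) * expR (- ((y - p) ^+ 2 / 16)).
Proof.
move=> y_itv.
set G := expR (- ((y - p) ^+ 2 / 16)).
apply: (@le_trans _ _ (\sum_(m < n) w m * (G * (1 + (y - p) * (q m - p) / 8)))).
  by apply: ler_sum => i _; rewrite ler_wpM2l ?expR_sqloss_tangent ?wmean_itv.
have hpS : p * \sum_(m < n) w m = \sum_(m < n) w m * q m by rewrite /p divfK ?gt_eqF.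
rewrite (eq_bigr (fun m : 'I_n => G * w m + G * (y - p) / 8 * (w m * q m)
                               - G * (y - p) / 8 * p * w m)); last by move=> i _; ring.
rewrite sumrB big_split /= -!mulr_sumr -hpS; lra.
Qed.

End WeightedMean.
End SquareLossMixability.

(** * The aggregating algorithm with sleeping experts *)

Definition prior (R : realType) (m : nat) : R := ((m.+1 * m.+2)%:R)^-1.

Lemma prior_gt0 (R : realType) m : 0 < prior R m.
Proof. by rewrite /prior invr_gt0 ltr0n muln_gt0. Qed.

Lemma sum_prior (R : realType) K : \sum_(m < K) prior R m = 1 - (K.+1%:R)^-1.
Proof.
elim: K => [|K IH]; first by rewrite big_ord0 invr1 subrr.
rewrite big_ord_recr /= IH /prior natrM -[K.+2]addn1 natrD.
have : (0 : R) < K.+1%:R by rewrite ltr0n.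
move: (K.+1%:R : R) => a a_gt0.
have a_neq0 : a != 0 by rewrite gt_eqF.
have aD1_neq0 : a + 1 != 0 by rewrite gt_eqF ?addr_gt0.
by field; rewrite a_neq0 aD1_neq0.
Qed.

Lemma expn_sum_asleep_le (m N : nat) : (2 ^ (\sum_(t < N) (2 ^ t <= m)) <= (2 * m).+1)%N.
Proof.
suff : (2 ^ (\sum_(t < N) (2 ^ t <= m)) <= (2 * m).+1 /\ \sum_(t < N) (2 ^ t <= m) <= N)%N.
  by case.
elim: N => [|N []]; first by rewrite big_ord0.
rewrite big_ord_recr /=; set c := (\sum_(i < N) _)%N => IH1 IH2.
case: (leqP (2 ^ N) m) => h /=; last by rewrite addn0; split => //; apply: leqW.
rewrite addn1 expnS; split=> //.
have : (2 ^ c <= 2 ^ N)%N by rewrite leq_exp2l.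
by move: (2 ^ c)%N (2 ^ N)%N h => u v; lia.
Qed.

Lemma sum_asleep_le (R : realType) (m N : nat) :
  \sum_(t < N) ((2 ^ t <= m)%N%:R : R) <= 2 + 2 * ln (m.+2%:R).
Proof.
have l2 := @ln2_ge_half R; have l2' := @ln2_le1 R.
rewrite -natr_sum; set c := (\sum_(t < N) (2 ^ t <= m))%N.
have h1 : c%:R * ln 2 <= ln ((2 * m).+1%:R : R).
  by rewrite -ln_pow2 ln_le_ln ?ltr0n ?expn_gt0 ?ler_nat ?expn_sum_asleep_le.
have h2 : ln ((2 * m).+1%:R : R) <= ln 2 + ln (m.+2%:R).
  rewrite -lnM ?posrE ?ltr0n // -natrM ln_le_ln ?ltr0n // ler_nat; lia.
have : 0 <= ln (m.+2%:R : R) by rewrite ln_ge0 // ler1n.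
have : (0 : R) <= c%:R by [].
nra.
Qed.

(* Expert [m] is asleep at the rounds [t] with [2 ^ t <= m]: there it is credited with
   the predictor's own loss, so that only the [2 ^ t] experts [m < 2 ^ t] are mixed at
   round [t]. *)
Section SleepingExperts.
Variables (R : realType) (X : Type) (ex : nat -> X -> R) (x : nat -> X) (y : nat -> R)
  (mu : nat -> R).

Definition sleeping_loss m t : R :=
  if (m < 2 ^ t)%N then (y t - ex m (x t)) ^+ 2 else (y t - mu t) ^+ 2.
Definition expert_loss m n := \sum_(t < n) sleeping_loss m t.
Definition pred_loss n := \sum_(t < n) (y t - mu t) ^+ 2.
Definition aa_weight m n := prior R m * expR (- (expert_loss m n / 16)).
Definition aa_potential K n :=
  \sum_(m < K) prior R m * expR ((pred_loss n - expert_loss m n) / 16).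

Hypothesis ex_itv : forall m z, -1 <= ex m z <= 1.
Hypothesis y_itv : forall n, -1 <= y n <= 1.
Hypothesis muE : forall n,
  mu n = (\sum_(m < 2 ^ n) aa_weight m n * ex m (x n)) / (\sum_(m < 2 ^ n) aa_weight m n).

Lemma aa_weight_gt0 m n : 0 < aa_weight m n.
Proof. by rewrite /aa_weight mulr_gt0 ?prior_gt0 ?expR_gt0. Qed.

Lemma sum_aa_weight_gt0 n : 0 < \sum_(m < 2 ^ n) aa_weight m n.
Proof.
rewrite (bigD1 (Ordinal (expn_gt0 2 n))) //= ltr_pwDl ?aa_weight_gt0 //.
by apply: sumr_ge0 => i _; exact: ltW (aa_weight_gt0 _ _).
Qed.

Lemma aa_pred_itv n : -1 <= mu n <= 1.
Proof.
rewrite muE; exact: (wmean_itv (fun m => ltW (aa_weight_gt0 m n)) (sum_aa_weight_gt0 n)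
  (fun m => ex_itv m (x n))).
Qed.

Lemma pred_lossS n : pred_loss n.+1 = pred_loss n + (y n - mu n) ^+ 2.
Proof. by rewrite /pred_loss big_ord_recr. Qed.

Lemma expert_lossS m n : expert_loss m n.+1 = expert_loss m n + sleeping_loss m n.
Proof. by rewrite /expert_loss big_ord_recr. Qed.

Lemma aa_potential_step_awake n (m : 'I_(2 ^ n)) :
  prior R m * expR ((pred_loss n.+1 - expert_loss m n.+1) / 16)
  = expR (pred_loss n / 16) * expR ((y n - mu n) ^+ 2 / 16)
    * (aa_weight m n * expR (- ((y n - ex m (x n)) ^+ 2 / 16))).
Proof.
rewrite pred_lossS expert_lossS /aa_weight /sleeping_loss ltn_ord.
set a := pred_loss n; set b := expert_loss m n.
rewrite [RHS](_ : _ = prior R m * (expR (a / 16) * expR ((y n - mu n) ^+ 2 / 16)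
  * expR (- (b / 16)) * expR (- ((y n - ex m (x n)) ^+ 2 / 16)))); last by ring.
by rewrite -!expRD; congr (_ * expR _); lra.
Qed.

Lemma aa_potential_nonincr K n : (2 ^ n <= K)%N -> aa_potential K n.+1 <= aa_potential K n.
Proof.
move=> hK; rewrite /aa_potential.
rewrite (bigID (fun m : 'I_K => (m < 2 ^ n)%N)) [leRHS](bigID (fun m : 'I_K => (m < 2 ^ n)%N)) /=.
apply: lerD; last first.
  apply: ler_sum => i /negbTE asleep.
  by rewrite pred_lossS expert_lossS /sleeping_loss asleep opprD addrACA subrr addr0.
set F := fun n0 (m : nat) => prior R m * expR ((pred_loss n0 - expert_loss m n0) / 16).
rewrite -(big_ord_widen _ (F n.+1)) // -(big_ord_widen _ (F n)) //.
rewrite (eq_bigr _ (fun m _ => aa_potential_step_awake m)) -mulr_sumr.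
have -> : \sum_(m < 2 ^ n) F n m
          = expR (pred_loss n / 16) * \sum_(m < 2 ^ n) aa_weight m n.
  rewrite mulr_sumr; apply: eq_bigr => m _.
  by rewrite /F /aa_weight mulrCA -expRD; congr (_ * expR _); lra.
have mix := sqloss_mixable (fun m => ltW (aa_weight_gt0 m n)) (sum_aa_weight_gt0 n)
  (fun m => ex_itv m (x n)) (y_itv n).
rewrite -muE in mix.
rewrite -mulrA ler_wpM2l ?expR_ge0 //.
apply: le_trans (ler_wpM2l (expR_ge0 _) mix) _.
by rewrite mulrCA -expRD subrr expR0 mulr1.
Qed.

Lemma aa_potential_le1 K N : (2 ^ N <= K)%N -> aa_potential K N <= 1.
Proof.
move=> hK; suff : forall n, (n <= N)%N -> aa_potential K n <= aa_potential K 0.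
  move/(_ N (leqnn N))/le_trans; apply.
  rewrite /aa_potential; under eq_bigr => i _ do
    rewrite /pred_loss /expert_loss !big_ord0 subrr mul0r expR0 mulr1.
  by rewrite sum_prior lerBlDr lerDl.
elim=> [|n IH] n_lt //; apply: le_trans (IH (ltnW n_lt)).
by rewrite aa_potential_nonincr // (leq_trans _ hK) // leq_exp2l // ltnW.
Qed.

Lemma pred_loss_le_expert_loss N m :
  pred_loss N <= expert_loss m N + 32 * ln (m.+2%:R).
Proof.
(* The [m]-th term of the potential is at most the potential, hence at most [1]. *)
pose K := maxn (2 ^ N) m.+1.
have hK : (2 ^ N <= K)%N by rewrite leq_maxl.
have hmK : (m < K)%N by rewrite leq_maxr.
have : prior R m * expR ((pred_loss N - expert_loss m N) / 16) <= 1.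
  apply: le_trans (aa_potential_le1 hK); rewrite /aa_potential (bigD1 (Ordinal hmK)) //=.
  by rewrite lerDl sumr_ge0 // => i _; rewrite mulr_ge0 ?expR_ge0 // ltW ?prior_gt0.
rewrite /prior mulrC -ler_pdivlMr ?invr_gt0 ?ltr0n ?muln_gt0 // invrK mul1r.
rewrite -ler_ln ?posrE ?expR_gt0 ?ltr0n ?muln_gt0 // expRK natrM lnM ?posrE ?ltr0n //.
have : ln (m.+1%:R : R) <= ln (m.+2%:R) by rewrite ln_le_ln ?ltr0n ?ler_nat.
lra.
Qed.

Lemma expert_loss_le N m : expert_loss m N <=
  \sum_(t < N) (y t - ex m (x t)) ^+ 2 + 4 * \sum_(t < N) ((2 ^ t <= m)%N%:R : R).
Proof.
rewrite mulr_sumr -big_split /=; apply: ler_sum => t _.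
rewrite /sleeping_loss; case: (ltnP m (2 ^ t)) => _ /=; first by rewrite mulr0 addr0.
have := sqr_sub_le4 (y_itv t) (aa_pred_itv t).
have := sqr_ge0 (y t - ex m (x t)); lra.
Qed.

Lemma aa_regret N m : pred_loss N <=
  \sum_(t < N) (y t - ex m (x t)) ^+ 2 + 8 + 40 * ln (m.+2%:R).
Proof.
have := pred_loss_le_expert_loss N m; have := expert_loss_le N m.
have := sum_asleep_le R m N; lra.
Qed.

End SleepingExperts.

(* The predictor replays the history to recover its own past predictions, which are the
   losses credited to the sleeping experts. *)
Section AggregatingStrategy.
Variables (R : realType) (X : Type) (ex : nat -> X -> R) (d : X * R).

Definition hist_loss (h : seq (X * R)) (ps : seq R) (m : nat) : R :=
  \sum_(t < size h) (if (m < 2 ^ t)%N then ((nth d h t).2 - ex m (nth d h t).1) ^+ 2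
                     else ((nth d h t).2 - nth 0 ps t) ^+ 2).

Definition aa_predict (h : seq (X * R)) (ps : seq R) (z : X) : R :=
  (\sum_(m < 2 ^ size h) prior R m * expR (- (hist_loss h ps m / 16)) * ex m z) /
  (\sum_(m < 2 ^ size h) prior R m * expR (- (hist_loss h ps m / 16))).

Definition aa_step (st : seq (X * R) * seq R) (xy : X * R) :=
  (rcons st.1 xy, rcons st.2 (aa_predict st.1 st.2 xy.1)).

Definition aa_strategy : strategy R X :=
  fun h z => aa_predict h (foldl aa_step ([::], [::]) h).2 z.

Lemma aa_strategyE (x : nat -> X) (y : nat -> R) n :
  let mu := pred_mu aa_strategy x y in
  mu n = (\sum_(m < 2 ^ n) aa_weight ex x y mu m n * ex m (x n))
         / (\sum_(m < 2 ^ n) aa_weight ex x y mu m n).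
Proof.
move=> mu; pose hist k := [seq (x i, y i) | i <- iota 0 k].
have replay k : foldl aa_step ([::], [::]) (hist k) = (hist k, [seq mu i | i <- iota 0 k]).
  elim: k => [|k IH] //.
  rewrite /hist -addn1 iotaD map_cat cats1 foldl_rcons -/(hist k) IH /aa_step /=.
  by rewrite map_cat cats1 /mu /pred_mu /aa_strategy -/(hist k) IH.
have lossE m : hist_loss (hist n) [seq mu i | i <- iota 0 n] m = expert_loss ex x y mu m n.
  rewrite /hist_loss /expert_loss /hist size_map size_iota; apply: eq_bigr => t _.
  have ht : (t < size (iota 0 n))%N by rewrite size_iota.
  by rewrite (nth_map 0 d) // (nth_map 0 0) // nth_iota.
rewrite {1}/mu /pred_mu /aa_strategy -/(hist n) replay /aa_predict /hist size_map size_iota.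
by under eq_bigr do rewrite lossE; under [X in _ / X]eq_bigr do rewrite lossE.
Qed.

End AggregatingStrategy.

Lemma aggregating_strategy (R : realType) (X : Type) (x0 : X) (ex : nat -> X -> R) :
  (forall m z, -1 <= ex m z <= 1) ->
  exists S : strategy R X, forall (x : nat -> X) (y : nat -> R), (forall n, -1 <= y n <= 1) ->
    (forall n, -1 <= pred_mu S x y n <= 1) /\
    forall N m, \sum_(n < N) (y n - pred_mu S x y n) ^+ 2
                <= \sum_(n < N) (y n - ex m (x n)) ^+ 2 + 8 + 40 * ln (m.+2%:R).
Proof.
move=> ex_itv; exists (aa_strategy ex (x0, 0)) => x y y_itv.
have muE := aa_strategyE ex (x0, 0) x y.
by split=> [n|N m]; [exact: aa_pred_itv muE n | exact: aa_regret muE N m].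
Qed.

Section FiniteNets.
Variables (R : realType) (X : topologicalType).
HB.instance Definition _ := isPointed.Build {uniform X -> R} (fun _ => 0).

Lemma compact_finite_net (A : set (X -> R)) (e : R) :
  0 < e -> compact (A : set {uniform X -> R}) ->
  exists s : seq (X -> R), (forall g, g \in s -> A g) /\
    (forall f, A f -> exists2 g, g \in s & forall z, `|f z - g z| < e).
Proof.
move=> e_gt0; rewrite (@compact_cover {uniform X -> R}) => cA.
pose B (g : {uniform X -> R}) : set {uniform X -> R} := [set h | forall z, `|g z - h z| < e].
have [g Ag|D' sD' cov] := cA {uniform X -> R} A (fun g => (B g)°) (fun g _ => open_interior _).
  exists g => //; apply/uniform_nbhs.
  exists [set xy : R * R | `|xy.1 - xy.2| < e]; split=> [|h /= Bh z]; last exact: Bh.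
  by rewrite -entourage_from_ballE; exists e.
exists [seq (g : X -> R) | g <- finmap.enum_fset D']; split.
  by move=> g /mapP [g' g'D ->]; apply/set_mem/sD'.
move=> f Af; have [g gD fg] := cov f Af.
exists (g : X -> R); first by apply/mapP; exists g.
by move=> z; rewrite distrC; exact: nbhs_singleton fg z.
Qed.

Lemma normr_le_supnorm (h : X -> R) z :
  (exists M, forall z, `|h z| <= M) -> `|h z| <= supnorm h.
Proof. by case=> M hM; apply: ub_le_sup; [exists M => _ [w _ <-]|exists z]. Qed.

Lemma supnorm_le (x0 : X) (h : X -> R) (e : R) : (forall z, `|h z| <= e) -> supnorm h <= e.
Proof. by move=> he; apply: ge_sup => [|_ [z _ <-]//]; exists `|h x0|, x0. Qed.

Lemma metric_entropy_net (A : set (X -> R)) (e : R) : A !=set0 ->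
  (exists n, is_net_card A e n) ->
  exists s : seq (X -> R), [/\ forall g, g \in s -> A g,
    forall f, A f -> exists2 g, g \in s & supnorm (fun z => f z - g z) <= e
    & ln (size s)%:R <= ln 2 * metric_entropy A e].
Proof.
move=> [f0 Af0] [n nnet].
have : exists n, `[< is_net_card A e n >] by exists n; exact/asboolP.
case/ex_minnP => n0 /asboolP [s [<- [sA scov]]] nmin.
exists s; split=> //.
have size_gt0 : (0 < size s)%N by have [g + _] := scov f0 Af0; case: (s).
set S := [set (n%:R : R) | n in is_net_card A e].
have : (size s)%:R <= inf S :> R.
  apply: lb_le_inf; first by exists (size s)%:R, (size s) => //; exists s.
  by move=> _ [m mnet <-]; rewrite ler_nat nmin //; exact/asboolP.
move=> /ln_le_ln; rewrite ltr0n => /(_ size_gt0) /le_trans; apply.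
by rewrite /metric_entropy /log2 -/S mulrC divfK // gt_eqF // ln2_gt0.
Qed.

End FiniteNets.

Lemma unit_ball_net (R : realType) (X : topologicalType) (x0 : X)
    (F : set (X -> R)) (nF : (X -> R) -> R) (e : R) :
  banach_compactly_embedded F nF -> 0 < e ->
  exists s : seq (X -> R), [/\ forall g, g \in s -> F g /\ nF g <= 1,
    forall f, F f -> nF f <= 1 -> exists2 k, (k < size s)%N &
      forall z, `|f z - nth (fun _ => 0) s k z| <= e
    & ln (size s)%:R <= ln 2 * metric_entropy [set f | F f /\ nF f <= 1] e].
Proof.
move=> [FC [F0 [_ [_ [_ [nFZ [_ [_ cU]]]]]]]] e_gt0.
set U := [set f | F f /\ nF f <= 1].
have U0 : U (fun _ => 0).
  have zero_scale : (fun z : X => 0 * (fun _ : X => 0 : R) z) = (fun _ => 0).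
    by apply: funext => z; rewrite mul0r.
  by split=> //; have := nFZ 0 _ F0; rewrite zero_scale normr0 mul0r => ->.
have [||s [sU scov eln]] := metric_entropy_net (A := U) (e := e).
- by exists (fun _ => 0).
- have [s [sU scov]] := compact_finite_net e_gt0 cU.
  exists (size s), s; split=> //; split=> // f Uf.
  have [g gs fg] := scov f Uf; exists g => //.
  by apply: (supnorm_le x0) => z; exact: ltW (fg z).
exists s; split=> // f Ff nf.
have [g gs fg] := scov f (conj Ff nf).
exists (index g s); first by rewrite index_mem.
move=> z; rewrite nth_index //; apply: le_trans fg.
apply: (normr_le_supnorm (h := fun w => f w - g w)).
have [[_ [M1 hM1]] [_ [M2 hM2]]] : CX f /\ CX g by split; apply: FC; have [] := sU g gs.
by exists (M1 + M2) => w; apply: le_trans (ler_normB _ _) _; exact: lerD.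
Qed.

(** * Experts built from the nets *)

(* Unlike [pickle], this coding of triples has polynomial size, which keeps the regret to
   expert [enc3 (I, J, k)] logarithmic in [I], [J] and [k]. *)
Definition enc2 (a b : nat) : nat := ((a + b) ^ 2 + b)%N.
Definition enc3 (t : nat * nat * nat) : nat := enc2 (enc2 t.1.1 t.1.2) t.2.

Lemma enc2_inj a b a' b' : enc2 a b = enc2 a' b' -> a = a' /\ b = b'.
Proof.
rewrite /enc2 => h.
suff hs : (a + b = a' + b')%N by rewrite hs in h; split; lia.
wlog lt_ab : a b a' b' h / (a + b < a' + b')%N.
  move=> wlog; case: (ltngtP (a + b) (a' + b')) => // [lt|lt]; first exact: wlog.
  by apply/esym/(wlog a' b' a b).
have : ((a + b).+1 ^ 2 <= (a' + b') ^ 2)%N by rewrite leq_exp2r.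
move: h; rewrite !expnS expn0 !muln1; nia.
Qed.

Lemma enc3_inj : injective enc3.
Proof. by move=> [[i j] k] [[i' j'] k']; rewrite /enc3 /= => /enc2_inj [/enc2_inj [-> ->] ->]. Qed.

Lemma enc2S_le a b : ((enc2 a b).+1 <= a.+1 ^ 2 * b.+1 ^ 2)%N.
Proof.
rewrite /enc2 -expnMn.
apply: leq_trans (_ : (a + b).+1 ^ 2 <= _)%N; last by rewrite leq_exp2r //; nia.
rewrite !expnS expn0 !muln1; nia.
Qed.

Lemma enc3SS_le i j k : ((enc3 (i, j, k)).+2 <= 2 * (i.+1 ^ 4 * j.+1 ^ 4 * k.+1 ^ 2))%N.
Proof.
have h : ((enc3 (i, j, k)).+1 <= i.+1 ^ 4 * j.+1 ^ 4 * k.+1 ^ 2)%N.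
  apply: leq_trans (enc2S_le _ _) _; rewrite leq_mul2r; apply/orP; right.
  by rewrite (_ : 4 = 2 * 2)%N // !expnM -expnMn leq_exp2r // enc2S_le.
by move: h; set P := (_ * _ * _)%N; lia.
Qed.

Lemma ln_enc3SS_le (R : realType) i j k :
  ln ((enc3 (i, j, k)).+2%:R : R) <=
  1 + 4 * ln (i.+1%:R) + 4 * ln (j.+1%:R) + 2 * ln (k.+1%:R).
Proof.
apply: le_trans (ln_le_ln (b := (2 * (i.+1 ^ 4 * j.+1 ^ 4 * k.+1 ^ 2))%N%:R) _ _) _.
- by rewrite ltr0n.
- by rewrite ler_nat enc3SS_le.
rewrite !natrM; have l2 := @ln2_le1 R.
have a_gt0 : (0 : R) < i.+1%:R by rewrite ltr0n.
have b_gt0 : (0 : R) < j.+1%:R by rewrite ltr0n.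
have c_gt0 : (0 : R) < k.+1%:R by rewrite ltr0n.
move: (i.+1%:R : R) (j.+1%:R : R) (k.+1%:R : R) a_gt0 b_gt0 c_gt0 => a b c *.
rewrite !lnM ?posrE ?mulr_gt0 //; lra.
Qed.

Lemma exists_left_inverse (T U : Type) (t0 : T) (f : T -> U) :
  injective f -> exists g : U -> T, cancel f g.
Proof.
move=> f_inj; have preimage u : exists t, forall t', f t' = u -> t' = t.
  case: (pselect (exists t, f t = u)) => [[t <-]|nf]; first by exists t => t' /f_inj.
  by exists t0 => t ft; exfalso; apply: nf; exists t.
by have [g gP] := choice preimage; exists g => t; rewrite -(gP (f t) t).
Qed.

Definition clip (R : realType) (z : R) : R := if z < -1 then -1 else if 1 < z then 1 else z.

Lemma clip_itv (R : realType) (z : R) : -1 <= clip z <= 1.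
Proof. by rewrite /clip; case: ltP => [|?]; [|case: ltP]; lra. Qed.

Lemma sqloss_clip_le (R : realType) (y u v e : R) : -1 <= y <= 1 -> `|u - v| <= e ->
  (y - clip u) ^+ 2 <= (y - v) ^+ 2 + 4 * e.
Proof.
move=> /andP[y1 y2]; rewrite ler_norml => /andP[e1 e2].
rewrite /clip !expr2.
case: (ltP u (-1)) => h1; [|case: (ltP 1 u) => h2];
  (case: (ltP v (-1)) => h3; [|case: (ltP 1 v) => h4]); nra.
Qed.

(* Expert [enc3 (I, J, k)] predicts the clipped [k]-th point of a [2 ^ - (I + J)]-net of the
   unit ball, dilated by [2 ^ J]: it approximates to within [2 ^ - I] every [f] with
   [nF f <= 2 ^ J]. *)
Lemma net_experts (R : realType) (X : topologicalType) (x0 : X)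
    (F : set (X -> R)) (nF : (X -> R) -> R) (L gamma : R) :
  banach_compactly_embedded F nF ->
  (forall eps : R, 0 < eps <= 2^-1 ->
     metric_entropy [set f | F f /\ nF f <= 1] eps <= L * (eps^-1) `^ gamma) ->
  exists ex : nat -> X -> R, (forall m z, -1 <= ex m z <= 1) /\
    forall f (I J : nat), F f -> nF f <= (2 ^ J)%:R -> (0 < I + J)%N ->
    exists m : nat,
      (forall (x : nat -> X) (y : nat -> R) N, (forall n, -1 <= y n <= 1) ->
         \sum_(n < N) (y n - ex m (x n)) ^+ 2
         <= \sum_(n < N) (y n - f (x n)) ^+ 2 + N%:R * (4 / (2 ^ I)%:R))
      /\ ln (m.+2%:R) <= 1 + 4 * ln (I.+1%:R) + 4 * ln (J.+1%:R)
                          + 2 * (ln 2 * (L * (2 ^ (I + J))%:R `^ gamma)).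
Proof.
move=> hB hent; have [_ [_ [_ [FZ [_ [nFZ _]]]]]] := hB.
have nets (ij : nat * nat) : exists s : seq (X -> R), (0 < ij.1 + ij.2)%N ->
    (forall f, F f -> nF f <= 1 -> exists2 k, (k < size s)%N &
       forall z, `|f z - nth (fun _ => 0) s k z| <= ((2 ^ (ij.1 + ij.2))%:R)^-1)
    /\ ln (size s)%:R <= ln 2 * (L * (2 ^ (ij.1 + ij.2))%:R `^ gamma).
  have [_|ij_gt0] := posnP (ij.1 + ij.2); first by exists [::].
  have pow_gt0 : (0 : R) < (2 ^ (ij.1 + ij.2))%:R by rewrite ltr0n expn_gt0.
  have eps_gt0 : (0 : R) < ((2 ^ (ij.1 + ij.2))%:R)^-1 by rewrite invr_gt0.
  have [s [_ scov sln]] := unit_ball_net x0 hB eps_gt0.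
  exists s => _; split=> //; apply: le_trans sln _; rewrite ler_wpM2l ?ln_ge0 ?ler1n //.
  rewrite -[X in _ <= L * X `^ _]invrK hent // invr_gt0 pow_gt0 lef_pV2 ?posrE //.
  by rewrite (ler_nat R 2) -[2%N]expn1 leq_exp2l.
have [net netP] := choice nets.
have [dec encK] := exists_left_inverse (0, 0, 0)%N enc3_inj.
pose ex m z := clip ((2 ^ (dec m).1.2)%:R * nth (fun _ => 0) (net (dec m).1) (dec m).2 z).
exists ex; split=> [m z|f I J Ff nfJ IJ]; first exact: clip_itv.
have [scov sln] := netP (I, J) IJ; rewrite /= in scov sln.
have pow_gt0 : (0 : R) < (2 ^ J)%:R by rewrite ltr0n expn_gt0.
have [|k k_lt kclose] := scov (fun z => ((2 ^ J)%:R)^-1 * f z) (FZ _ _ Ff).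
  by rewrite nFZ // ger0_norm ?invr_ge0 // ler_pdivrMl // mulr1.
exists (enc3 (I, J, k)); split=> [x y N y_itv|].
  rewrite (mulr_natl _ N) -[in _ *+ N](card_ord N) -sumr_const -big_split /=.
  apply: ler_sum => n _; rewrite /ex encK /=; apply: sqloss_clip_le (y_itv n) _.
  move: (x n) => z.
  have pow_neq0 : (2 ^ J)%:R != 0 :> R by rewrite gt_eqF.
  rewrite -[f z](mulVKf pow_neq0) -mulrBr normrM gtr0_norm // distrC.
  apply: le_trans (ler_wpM2l (ltW pow_gt0) (kclose z)) _.
  by rewrite expnD natrM invfM mulrCA mulfV ?gt_eqF // mulr1.
apply: le_trans (ln_enc3SS_le R I J k) _.
have : ln (k.+1%:R : R) <= ln (size (net (I, J)))%:R by rewrite ln_le_ln ?ltr0n ?ler_nat.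
lra.
Qed.

(** * The regret budget *)

Lemma ln_succ_le_log2p (R : realType) (k : nat) (t : R) :
  ((2 ^ k)%:R : R) <= t -> ln (k.+1%:R : R) <= 1 + log2p (log2 t).
Proof.
move=> pow_le; have l2p := @ln2_gt0 R; have l2 := @ln2_le1 R.
case: k pow_le => [|k] pow_le; first by rewrite ln1; have := log2p_ge0 (log2 t); lra.
have k_le : (k.+1%:R : R) <= log2 t.
  by rewrite /log2 ler_pdivlMr // -ln_pow2 ln_le_ln ?ltr0n ?expn_gt0.
have k_ge1 : (1 : R) <= k.+1%:R by rewrite ler1n.
have log2p_ge : ln (log2 t) <= log2p (log2 t).
  have : 0 <= ln (log2 t) by rewrite ln_ge0 //; lra.
  by rewrite /log2p ifT ?(le_trans k_ge1) // {2}/log2 ler_pdivlMr //; nra.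
have : ln (k.+1%:R : R) <= ln (log2 t) by rewrite ln_le_ln //; lra.
have := ln_succ_le R (ltn0Sn k); lra.
Qed.

Lemma log2p_log2 (R : realType) (t : R) : 2 <= t -> log2p (log2 t) = log2 (log2 t).
Proof.
move=> t_ge2; rewrite /log2p ifT // /log2 ler_pdivlMr ?ln2_gt0 // mul1r.
by rewrite ln_le_ln.
Qed.

Definition rate (R : realType) (L g phi n : R) : R :=
  L `^ (g + 1)^-1 * phi `^ (g / (g + 1)) * n `^ (g / (g + 1)).

Section RegretBudget.
Variables (R : realType) (L g phi n : R).
Local Notation M := (rate L g phi n).

Lemma rate_gt0 : 1 <= L -> 0 <= g -> 1 <= phi -> 1 <= n -> 0 < M.
Proof. by move=> *; rewrite /rate !mulr_gt0 ?powR_gt0 //; lra. Qed.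

Lemma ln_rate : 1 <= L -> 0 < g -> 1 <= phi -> 1 <= n ->
  ln M = (g + 1)^-1 * ln L + g / (g + 1) * ln phi + g / (g + 1) * ln n.
Proof. by move=> *; rewrite /rate !lnM ?posrE ?mulr_gt0 ?powR_gt0 ?ln_powR //; lra. Qed.

Lemma rate_ge1 : 1 <= L -> 0 < g -> 1 <= phi -> 1 <= n -> 1 <= M.
Proof.
move=> L_ge1 g_gt0 phi_ge1 n_ge1.
have : 0 <= ln M.
  rewrite ln_rate //; have := ln_ge0 L_ge1; have := ln_ge0 phi_ge1; have := ln_ge0 n_ge1.
  have : 0 <= (g + 1)^-1 by rewrite invr_ge0; lra.
  have : 0 <= g / (g + 1) by rewrite divr_ge0 //; lra.
  nra.
have M_gt0 : 0 < M by rewrite rate_gt0 //; lra.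
move=> lnM_ge0; rewrite leNgt; apply/negP => M_lt1.
have : ln M < 0 by rewrite ln_lt0 // M_gt0 M_lt1.
lra.
Qed.

Lemma rate_fixpoint : 1 <= L -> 0 < g -> 1 <= phi -> 1 <= n -> L * (n * phi / M) `^ g = M.
Proof.
move=> L_ge1 g_gt0 phi_ge1 n_ge1; have M_gt0 : 0 < M by rewrite rate_gt0 //; lra.
have : 0 < n * phi / M by rewrite divr_gt0 // mulr_gt0 //; lra.
move=> x_gt0; apply: ln_inj; rewrite ?posrE ?mulr_gt0 ?powR_gt0 //; try lra.
rewrite lnM ?posrE ?powR_gt0 //; last lra.
rewrite ln_powR ln_div ?posrE ?mulr_gt0 //; try lra.
rewrite lnM ?posrE //; try lra.
rewrite ln_rate //; first by field; lra.
all: by apply: powR_gt0; lra.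
Qed.

Lemma ln_succ_le_rate (I : nat) : 1 <= L -> 0 < g -> 1 <= phi -> 1 <= n ->
  ((2 ^ I)%:R : R) <= n / M -> ln (I.+1%:R : R) <= 2 * M + 1 + log2p (log2 (n / g)).
Proof.
move=> L_ge1 g_gt0 phi_ge1 n_ge1 pow_le.
have M_ge1 : 1 <= M by rewrite rate_ge1.
have l2 := @ln2_ge_half R; have P_ge0 := log2p_ge0 (log2 (n / g)).
have [g_ge1|g_lt1] := leP 1 g; last first.
  suff : ((2 ^ I)%:R : R) <= n / g by move/ln_succ_le_log2p; lra.
  apply: le_trans pow_le _; apply: (@le_trans _ _ n).
    by rewrite ler_pdivrMr; [nra|lra].
  by rewrite ler_pdivlMr //; nra.
have lnI : I%:R * ln 2 <= ln n - ln M.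
  by rewrite -ln_pow2 -ln_div ?posrE ?ln_le_ln ?ltr0n ?expn_gt0 //; lra.
have lnM_ge : ln n - ln M <= ln M.
  have := ln_rate L_ge1 g_gt0 phi_ge1 n_ge1.
  have : 0 <= (g - 1) / (g + 1) * ln n by rewrite !mulr_ge0 ?invr_ge0 ?ln_ge0 //; lra.
  have : 0 <= (g + 1)^-1 * ln L by rewrite mulr_ge0 ?invr_ge0 ?ln_ge0 //; lra.
  have : 0 <= g / (g + 1) * ln phi by rewrite mulr_ge0 ?divr_ge0 ?ln_ge0 //; lra.
  have : 2 * (g / (g + 1) * ln n) - ln n = (g - 1) / (g + 1) * ln n by field; lra.
  lra.
have : ln M < M by rewrite ln_sublinear //; lra.
have I_ge0 : (0 : R) <= I%:R := ler0n _ I.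
have : ln (I.+1%:R : R) <= I%:R.
  by rewrite -natr1 addrC le_ln1Dx // (lt_le_trans _ I_ge0) // ltrN10.
nra.
Qed.

Lemma entropy_term_le (I J : nat) : 1 <= L -> 0 < g -> 1 <= phi -> 1 <= n ->
  ((2 ^ I)%:R : R) <= n / M -> ((2 ^ J)%:R : R) <= phi ->
  ln 2 * (L * (2 ^ (I + J))%:R `^ g) <= M.
Proof.
move=> L_ge1 g_gt0 phi_ge1 n_ge1 powI_le powJ_le.
have pow_le : ((2 ^ (I + J))%:R : R) <= n * phi / M.
  by rewrite expnD natrM mulrAC ler_pM ?ler0n.
have := rate_fixpoint L_ge1 g_gt0 phi_ge1 n_ge1.
have : L * (2 ^ (I + J))%:R `^ g <= L * (n * phi / M) `^ g.
  rewrite ler_wpM2l ?ge0_ler_powR ?nnegrE ?ler0n ?(le_trans _ pow_le) //; lra.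
have : 0 <= L * (2 ^ (I + J))%:R `^ g by rewrite mulr_ge0 ?powR_ge0 //; lra.
have := @ln2_le1 R; have := @ln2_gt0 R; nra.
Qed.

Lemma approx_term_le (I : nat) : 1 <= L -> 0 < g -> 1 <= phi -> 1 <= n ->
  n / M < (2 ^ I.+1)%:R -> n * (4 / (2 ^ I)%:R) <= 8 * M.
Proof.
move=> L_ge1 g_gt0 phi_ge1 n_ge1; have M_gt0 : 0 < M by rewrite rate_gt0 //; lra.
have pow_gt0 : (0 : R) < (2 ^ I)%:R by rewrite ltr0n expn_gt0.
rewrite expnS natrM ltr_pdivrMr // => n_lt.
by rewrite mulrA ler_pdivrMr //; nra.
Qed.

Lemma regret_budget (I J : nat) : 1 <= L -> 0 < g -> 2 <= phi -> 1 <= n ->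
  ((2 ^ I)%:R : R) <= n / M < (2 ^ I.+1)%:R -> (1 <= J)%N -> ((2 ^ J)%:R : R) <= phi ->
  8 + 40 * (1 + 4 * ln (I.+1%:R) + 4 * ln (J.+1%:R) + 2 * (ln 2 * (L * (2 ^ (I + J))%:R `^ g)))
    + n * (4 / (2 ^ I)%:R) <= 1000 * (M + log2p (log2 (n / g)) + log2 (log2 phi)).
Proof.
move=> L_ge1 g_gt0 phi_ge2 n_ge1 /andP[powI_le powI_gt] J_ge1 powJ_le.
have phi_ge1 : 1 <= phi by lra.
have := ln_succ_le_rate L_ge1 g_gt0 phi_ge1 n_ge1 powI_le.
have := ln_succ_le_log2p powJ_le; rewrite log2p_log2 //.
have := entropy_term_le L_ge1 g_gt0 phi_ge1 n_ge1 powI_le powJ_le.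
have := approx_term_le L_ge1 g_gt0 phi_ge1 n_ge1 powI_gt.
have := rate_ge1 L_ge1 g_gt0 phi_ge1 n_ge1.
have := log2p_ge0 (log2 (n / g)); have := log2_log2_ge0 phi_ge2.
lra.
Qed.

End RegretBudget.

Theorem mainTheorem14 (R : realType) :
  exists C : R, forall (X : topologicalType) (F : set (X -> R)) (nF : (X -> R) -> R)
    (L gamma : R),
    (exists x : X, True) ->
    banach_compactly_embedded F nF ->
    1 <= L -> 0 < gamma ->
    (forall eps : R, 0 < eps <= 2^-1 ->
       metric_entropy [set f | F f /\ nF f <= 1] eps <= L * (eps^-1) `^ gamma) ->
    exists S : strategy R X,
      forall (N : nat) (f : X -> R) (x : nat -> X) (y : nat -> R),
        (1 <= N)%N -> F f -> (forall n, -1 <= y n <= 1) ->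
        let phi := 2 * Num.max 1 (nF f) in
        \sum_(n < N) (y n - pred_mu S x y n) ^+ 2
        <= \sum_(n < N) (y n - f (x n)) ^+ 2
           + C * (L `^ (gamma + 1)^-1 * phi `^ (gamma / (gamma + 1))
                    * (N%:R) `^ (gamma / (gamma + 1))
                  + log2p (log2 (N%:R / gamma)) + log2 (log2 phi)).
Proof.
exists 1000 => X F nF L gamma [x0 _] hB L_ge1 gamma_gt0 hent.
have [ex [ex_itv ex_approx]] := net_experts x0 hB hent.
have [S hS] := aggregating_strategy x0 ex_itv.
exists S => N f x y N_ge1 Ff y_itv /=; set phi := 2 * _.
have [S_itv S_regret] := hS x y y_itv.
rewrite -/(rate L gamma phi N%:R).
have N_ge1' : (1 : R) <= N%:R by rewrite ler1n.
have nF_le : 1 <= Num.max 1 (nF f) /\ nF f <= Num.max 1 (nF f) by rewrite !le_max !lexx orbT.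
have [j /andP[powj_le powj_gt]] := pow2_bracket nF_le.1.
have pow_le_phi : (2 ^ j.+1)%:R <= phi by rewrite /phi expnS natrM ler_pM2l.
have phi_ge2 : 2 <= phi by rewrite /phi; lra.
have M_ge1 : 1 <= rate L gamma phi N%:R by rewrite rate_ge1 //; lra.
have := log2p_ge0 (log2 (N%:R / gamma)); have := log2_log2_ge0 phi_ge2.
have : 0 <= \sum_(n < N) (y n - f (x n)) ^+ 2 by rewrite sumr_ge0 // => n _; exact: sqr_ge0.
have [N_le_M|M_lt_N] := leP N%:R (rate L gamma phi N%:R).
  by have := sum_sqr_sub_le N y_itv S_itv; lra.
have [I powI] : exists I : nat,
    ((2 ^ I)%:R : R) <= N%:R / rate L gamma phi N%:R < (2 ^ I.+1)%:R.
  by apply: pow2_bracket; rewrite ler_pdivlMr ?mul1r //; lra.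
have [m [m_approx m_ln]] := ex_approx f I j.+1 Ff (ltW (le_lt_trans nF_le.2 powj_gt))
  (ltn_addl I (ltn0Sn j)).
have := m_approx x y N y_itv; have := S_regret N m.
have := regret_budget L_ge1 gamma_gt0 phi_ge2 N_ge1' powI (ltn0Sn j) pow_le_phi.
lra.
Qed.
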